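(* For every program $p$, at most one of the following holds: $\mathrm{gvar}(p)$ (i.e. $\mathrm{gvar}_x(p)$ for some variable $x$), $\mathrm{uabs}(p)$, $\mathrm{uinert}(p)$. Moreover: (1) if $\mathrm{gvar}_x(p)$ then $\mathrm{unf}(p)=x$; (2) if $\mathrm{uabs}(p)$ then $\mathrm{unf}(p)$ is a value; (3) if $\mathrm{uinert}(p)$ then $\mathrm{unf}(p)$ is a non-variable inert term.
   Context: Terms $t,u ::= x\mid\lambda x.t\mid t\,u$; values $v ::= \lambda x.t$ (variables are not values); environments $E ::= \epsilon\mid E[x\leftarrow t]$; programs $p ::= (t,E)$, with $x$ bound in $E$ and $u$ in $(u,E[x\leftarrow t])$, up to $\alpha$; appended ES bind fresh variables; $(t,E)@[x\leftarrow u]:=(t,E[x\leftarrow u])$. Inert terms $i ::= x\mid i\,f$, fireballs $f ::= v\mid i$, non-variable inert terms $i^{+} ::= i\,f$. Needed variables: $nv(x)=\{x\}$, $nv(\lambda x.t)=\emptyset$, $nv(tu)=nv(t)\cup nv(u)$; $nv((t,\epsilon))=nv(t)$, $nv((t,E[x\leftarrow u]))=nv((t,E))$ if $x\notin nv((t,E))$, else $(nv((t,E))\setminus\{x\})\cup nv(u)$. Applied variables: $an(\lambda x.t)=an(x)=\emptyset$, $an(tu)=\{x\}\cup an(u)$ if $t=x$ variable, else $an(t)\cup an(u)$; $an((t,\epsilon))=an(t)$; $an((t,E[x\leftarrow u]))$ is $an((t,E))$ if $x\notin nv((t,E))$; $(an((t,E))\setminus\{x\})\cup an(u)$ if $x\in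 nv((t,E))$ and ($x\notin an((t,E))$ or $u$ not a variable); $(an((t,E))\setminus\{x\})\cup\{y\}$ if $x\in nv((t,E))$, $x\in an((t,E))$, $u=y$ variable. Unapplied variables: $un(\lambda x.t)=\emptyset$, $un(x)=\{x\}$, $un(tu)=un(u)$ if $t$ variable, else $un(t)\cup un(u)$; $un((t,\epsilon))=un(t)$; $un((t,E[x\leftarrow u]))$ is $un((t,E))$ if $x\notin un((t,E))$ and ($x\notin nv((t,E))$ or $u$ a variable), and $(un((t,E))\setminus\{x\})\cup un(u)$ if $x\in un((t,E))$ or ($x\in nv((t,E))$ and $u$ not a variable). Predicates, inductively. $\mathrm{gvar}_x((x,\epsilon))$; $\mathrm{gvar}_x(p)\Rightarrow\mathrm{gvar}_y(p@[x\leftarrow y])$; $\mathrm{gvar}_x(p)$, $z\neq x$ $\Rightarrow$ $\mathrm{gvar}_x(p@[z\leftarrow t])$. $\mathrm{uabs}((v,\epsilon))$; $\mathrm{gvar}_x(p)\Rightarrow\mathrm{uabs}(p@[x\leftarrow v])$; $\mathrm{uabs}(p)\Rightarrow\mathrm{uabs}(p@[x\leftarrow t])$. $\mathrm{uinert}((i^{+},\epsilon))$; $\mathrm{gvar}_x(p)\Rightarrow\mathrm{uinert}(p@[x\leftarrow i^{+}])$; $\mathrm{uinert}(p)$, $x\in nv(p)$ $\Rightarrow$ $\mathrm{uinert}(p@[x\leftarrow i])$; $\mathrm{uinert}(p)$, $x\in un(p)$, $x\notin an(p)$ $\Rightarrow$ $\mathrm{uinert}(p@[x\leftarrow v])$;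 $\mathrm{uinert}(p)$, $x\notin nv(p)$ $\Rightarrow$ $\mathrm{uinert}(p@[x\leftarrow t])$. Unfolding: $\mathrm{unf}((t,\epsilon)):=t$, $\mathrm{unf}((t,E[x\leftarrow u])):=\mathrm{unf}((t,E))\{x:=u\}$ (capture-avoiding meta-level substitution). *)

(* Locally nameless syntax for the lambda-calculus with
   explicit substitutions (ES) in program form (t, E). *)
From Stdlib Require Import Arith Bool.

(* Variables are natural numbers. Lambda-bound variables are de Bruijn
   indices (BVar), free variables / ES-bound variables are names (Fvar).
   Paper terms correspond to locally closed terms (lc). *)
Inductive term : Type :=
| BVar : nat -> term
| Fvar : nat -> term
| Abs  : term -> term
| App  : term -> term -> term.

Inductive env : Type :=
| Eps  : env
| Snoc : env -> nat -> term -> env.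

Definition prog : Type := (term * env)%type.

Definition app_es (p : prog) (x : nat) (u : term) : prog :=
  (fst p, Snoc (snd p) x u).

Fixpoint lc_at (k : nat) (t : term) : bool :=
  match t with
  | BVar n => n <? k
  | Fvar _ => true
  | Abs b => lc_at (S k) b
  | App a b => lc_at k a && lc_at k b
  end.
Definition lc (t : term) : bool := lc_at 0 t.

Fixpoint fvt (t : term) (y : nat) : bool :=
  match t with
  | BVar _ => false
  | Fvar x => Nat.eqb x y
  | Abs b => fvt b y
  | App a b => fvt a y || fvt b y
  end.

Fixpoint in_dom (E : env) (y : nat) : bool :=
  match E with
  | Eps => false
  | Snoc E x _ => Nat.eqb x y || in_dom E y
  end.

(* Well-formed representative of an alpha-class of programs
   (Barendregt convention on ES binders): all terms locally closed,
   ES binders pairwise distinct, and the variables bound by the ES of E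
   and by [x <- u] itself do not occur free in u. *)
Fixpoint wf_env (t : term) (E : env) : Prop :=
  match E with
  | Eps => lc t = true
  | Snoc E x u =>
      wf_env t E /\ lc u = true /\ in_dom E x = false /\ fvt u x = false /\
      (forall y, in_dom E y = true -> fvt u y = false)
  end.
Definition wf (p : prog) : Prop := wf_env (fst p) (snd p).

Definition is_var (t : term) : bool :=
  match t with Fvar _ => true | _ => false end.

Definition is_value (t : term) : Prop := exists b, t = Abs b.

Inductive inert : term -> Prop :=
| inert_var : forall x, inert (Fvar x)
| inert_app : forall i f, inert i -> fireball f -> inert (App i f)
with fireball : term -> Prop :=
| fireball_val : forall v, is_value v -> fireball v
| fireball_inert : forall i, inert i -> fireball i.

Inductive ninert : term -> Prop :=
| ninert_app : forall i f, inert i -> fireball f -> ninert (App i f).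

(* needed variables *)
Fixpoint nvt (t : term) (y : nat) : bool :=
  match t with
  | BVar _ => false
  | Fvar x => Nat.eqb x y
  | Abs _ => false
  | App a b => nvt a y || nvt b y
  end.

Fixpoint nvE (t : term) (E : env) (y : nat) : bool :=
  match E with
  | Eps => nvt t y
  | Snoc E x u =>
      if nvE t E x then (nvE t E y && negb (Nat.eqb y x)) || nvt u y
      else nvE t E y
  end.
Definition nv (p : prog) : nat -> bool := nvE (fst p) (snd p).

(* applied variables *)
Fixpoint ant (t : term) (y : nat) : bool :=
  match t with
  | BVar _ => false
  | Fvar _ => false
  | Abs _ => false
  | App a b =>
      match a with
      | Fvar x => Nat.eqb x y || ant b y
      | _ => ant a y || ant b y
      end
  end.

Fixpoint anE (t : term) (E : env) (y : nat) : bool :=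
  match E with
  | Eps => ant t y
  | Snoc E x u =>
      if nvE t E x then
        if anE t E x then
          match u with
          | Fvar z => (anE t E y && negb (Nat.eqb y x)) || Nat.eqb z y
          | _ => (anE t E y && negb (Nat.eqb y x)) || ant u y
          end
        else (anE t E y && negb (Nat.eqb y x)) || ant u y
      else anE t E y
  end.
Definition an (p : prog) : nat -> bool := anE (fst p) (snd p).

(* unapplied variables *)
Fixpoint unt (t : term) (y : nat) : bool :=
  match t with
  | BVar _ => false
  | Fvar x => Nat.eqb x y
  | Abs _ => false
  | App a b =>
      match a with
      | Fvar _ | BVar _ => unt b y
      | _ => unt a y || unt b y
      end
  end.

Fixpoint unE (t : term) (E : env) (y : nat) : bool :=
  match E with
  | Eps => unt t y
  | Snoc E x u =>
      if unE t E x || (nvE t E x && negb (is_var u))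
      then (unE t E y && negb (Nat.eqb y x)) || unt u y
      else unE t E y
  end.
Definition un (p : prog) : nat -> bool := unE (fst p) (snd p).

Inductive gvar : nat -> prog -> Prop :=
| gvar_base : forall x, gvar x (Fvar x, Eps)
| gvar_ren : forall x y p, gvar x p -> gvar y (app_es p x (Fvar y))
| gvar_skip : forall x z t p, gvar x p -> z <> x -> gvar x (app_es p z t).

Inductive uabs : prog -> Prop :=
| uabs_base : forall v, is_value v -> uabs (v, Eps)
| uabs_gvar : forall x p v, gvar x p -> is_value v -> uabs (app_es p x v)
| uabs_skip : forall x p t, uabs p -> uabs (app_es p x t).

Inductive uinert : prog -> Prop :=
| uinert_base : forall i, ninert i -> uinert (i, Eps)
| uinert_gvar : forall x p i, gvar x p -> ninert i -> uinert (app_es p x i)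
| uinert_inert : forall x p i, uinert p -> nv p x = true -> inert i ->
    uinert (app_es p x i)
| uinert_val : forall x p v, uinert p -> un p x = true -> an p x = false ->
    is_value v -> uinert (app_es p x v)
| uinert_skip : forall x p t, uinert p -> nv p x = false ->
    uinert (app_es p x t).

(* unfolding; substitution of a name by a (locally closed) term is
   capture-avoiding in the locally nameless representation *)
Fixpoint subst (x : nat) (u : term) (t : term) : term :=
  match t with
  | BVar n => BVar n
  | Fvar y => if Nat.eqb y x then u else Fvar y
  | Abs b => Abs (subst x u b)
  | App a b => App (subst x u a) (subst x u b)
  end.

Fixpoint unfE (t : term) (E : env) : term :=
  match E with
  | Eps => t
  | Snoc E x u => subst x u (unfE t E)
  end.
Definition unf (p : prog) : term := unfE (fst p) (snd p).

From Stdlib Require Import Arith Bool.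

(* Each predicate fixes the shape of the unfolding: gvar_x p gives the variable
   x, uabs p an abstraction, uinert p an application that is inert, so at most
   one of them holds.  The side conditions of the uinert rules are read on the
   environment, but the needed and applied variables of p are exactly those of
   unf p; under that reading each rule is an instance of substitution
   preserving inertness: an inert term may replace any variable, a value only a
   variable that is not applied (nor the whole term), and anything may replace
   a variable with no needed occurrence. *)

(* Splitting on [y = x] first identifies the atoms at [y] with those at [x];
   the remaining boolean atoms are then independent up to [ant_nvt]. *)
Ltac case_bools y x :=
  destruct (Nat.eqb_spec y x) as [->|]; simpl;
  repeat match goal with
  | |- context [nvt ?t ?v] => is_var t; destruct (nvt t v)
  | |- context [ant ?t ?v] => is_var t; destruct (ant t v)
  | |- context [?a =? ?b] => destruct (Nat.eqb_spec a b)
  end; simpl; intuition congruence.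

Lemma ant_nvt T y : ant T y = true -> nvt T y = true.
Proof.
  induction T as [| | |a IHa b IHb]; simpl; try discriminate.
  destruct a; rewrite !orb_true_iff in *; tauto.
Qed.

Lemma nvt_subst x u y T :
  nvt (subst x u T) y =
  if nvt T x then (nvt T y && negb (y =? x)) || nvt u y else nvt T y.
Proof.
  induction T as [n|n|b _|a IHa b IHb]; simpl; try reflexivity.
  - case_bools n x.
  - rewrite IHa, IHb. case_bools y x.
Qed.

Lemma ant_app_nonvar a b y :
  is_var a = false -> ant (App a b) y = ant a y || ant b y.
Proof. destruct a; easy. Qed.

Lemma is_var_subst x u T :
  is_var T = false -> is_var (subst x u T) = false.
Proof. destruct T; easy. Qed.

Lemma ant_subst_var x z y T :
  ant (subst x (Fvar z) T) y =
  if ant T x then (ant T y && negb (y =? x)) || (z =? y) else ant T y.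
Proof.
  induction T as [n|n|b _|a IHa b IHb]; try reflexivity.
  - simpl. destruct (n =? x); reflexivity.
  - destruct (is_var a) eqn:Ha.
    + destruct a as [|m| |]; try discriminate. simpl. rewrite IHb.
      case_bools y x.
    + cbn [subst]. rewrite !ant_app_nonvar, IHa, IHb by auto using is_var_subst.
      case_bools y x.
Qed.

Lemma ant_subst_nonvar x u y T :
  is_var u = false ->
  ant (subst x u T) y =
  if nvt T x then (ant T y && negb (y =? x)) || ant u y else ant T y.
Proof.
  intros Hu.
  induction T as [n|n|b _|a IHa b IHb]; try reflexivity.
  - simpl. case_bools n x.
  - destruct (is_var a) eqn:Ha.
    + destruct a as [|m| |]; try discriminate. cbn [subst nvt].
      generalize (ant_nvt b x).
      destruct (Nat.eqb_spec m x) as [->|]; [rewrite ant_app_nonvar by exact Hu|];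
        simpl; rewrite IHb; case_bools y x.
    + cbn [subst nvt]. rewrite !ant_app_nonvar, IHa, IHb by auto using is_var_subst.
      generalize (ant_nvt a x) (ant_nvt b x).
      case_bools y x.
Qed.

Lemma nvE_unfE t E y : nvE t E y = nvt (unfE t E) y.
Proof.
  revert y; induction E as [|E IHE x u]; intros y; simpl; [reflexivity|].
  rewrite nvt_subst, !IHE. reflexivity.
Qed.

Lemma anE_unfE t E y : anE t E y = ant (unfE t E) y.
Proof.
  revert y; induction E as [|E IHE x u]; intros y; simpl; [reflexivity|].
  rewrite !nvE_unfE, !IHE. generalize (ant_nvt (unfE t E) x).
  destruct (is_var u) eqn:Hu.
  - destruct u as [|z| |]; try discriminate. rewrite ant_subst_var.
    set (U := unfE t E). case_bools y x.
  - rewrite ant_subst_nonvar by exact Hu.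
    destruct u; try discriminate; set (U := unfE t E); case_bools y x.
Qed.

Scheme inert_mut := Induction for inert Sort Prop
  with fireball_mut := Induction for fireball Sort Prop.
Combined Scheme inert_fireball_ind from inert_mut, fireball_mut.

Lemma value_subst x u v : is_value v -> is_value (subst x u v).
Proof. intros [b ->]. exists (subst x u b). reflexivity. Qed.

Lemma inert_fireball_subst_inert x u :
  inert u ->
  (forall T, inert T -> inert (subst x u T)) /\
  (forall T, fireball T -> fireball (subst x u T)).
Proof.
  intros Hu. apply inert_fireball_ind; simpl.
  - intros y. destruct (y =? x); [exact Hu | constructor].
  - intros i f _ Hi _ Hf. constructor; assumption.
  - intros v Hv. apply fireball_val, value_subst, Hv.
  - intros i _ Hi. apply fireball_inert, Hi.
Qed.

Lemma inert_fireball_subst_unneeded x u :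
  (forall T, inert T -> nvt T x = false -> inert (subst x u T)) /\
  (forall T, fireball T -> nvt T x = false -> fireball (subst x u T)).
Proof.
  apply inert_fireball_ind; simpl.
  - intros y ->. constructor.
  - intros i f _ Hi _ Hf [Hix Hfx]%orb_false_iff. constructor; auto.
  - intros v Hv _. apply fireball_val, value_subst, Hv.
  - intros i _ Hi Hix. apply fireball_inert, Hi, Hix.
Qed.

Lemma ant_app_false i f x :
  ant (App i f) x = false -> i <> Fvar x /\ ant i x = false /\ ant f x = false.
Proof.
  destruct i as [|y| |]; simpl; rewrite ?orb_false_iff; try easy.
  intros [Hyx Hf]. apply Nat.eqb_neq in Hyx. split; [congruence | easy].
Qed.

Lemma inert_fireball_subst_value x v :
  is_value v ->
  (forall T, inert T -> T <> Fvar x -> ant T x = false -> inert (subst x v T)) /\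
  (forall T, fireball T -> ant T x = false -> fireball (subst x v T)).
Proof.
  intros Hv. apply inert_fireball_ind; simpl.
  - intros y Hyx _. destruct (Nat.eqb_spec y x); [congruence | constructor].
  - intros i f _ Hi _ Hf _ (Hix & Hi' & Hf')%ant_app_false. constructor; auto.
  - intros w Hw _. apply fireball_val, value_subst, Hw.
  - intros i Hinert Hi Hix. destruct Hinert as [y|].
    + simpl. destruct (Nat.eqb_spec y x).
      * apply fireball_val, Hv.
      * apply fireball_inert, inert_var.
    + apply fireball_inert, Hi; easy.
Qed.

Lemma ninert_subst_inert x u T : inert u -> ninert T -> ninert (subst x u T).
Proof.
  intros Hu [i f Hi Hf].
  constructor; apply (inert_fireball_subst_inert x u Hu); assumption.
Qed.

Lemma ninert_subst_unneeded x u T :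
  ninert T -> nvt T x = false -> ninert (subst x u T).
Proof.
  intros [i f Hi Hf] HTx. simpl in HTx. apply orb_false_iff in HTx as [Hix Hfx].
  constructor; apply (inert_fireball_subst_unneeded x u); assumption.
Qed.

Lemma ninert_subst_value x v T :
  is_value v -> ninert T -> ant T x = false -> ninert (subst x v T).
Proof.
  intros Hv [i f Hi Hf] HTx. apply ant_app_false in HTx as (Hix & Hi' & Hf').
  constructor; apply (inert_fireball_subst_value x v Hv); assumption.
Qed.

Lemma unf_app_es p x u : unf (app_es p x u) = subst x u (unf p).
Proof. reflexivity. Qed.

Lemma gvar_unf {x p} : gvar x p -> unf p = Fvar x.
Proof.
  induction 1 as [x | x y p _ IH | x z t p _ IH Hzx]; rewrite ?unf_app_es, ?IH; simpl.
  - reflexivity.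
  - rewrite Nat.eqb_refl. reflexivity.
  - destruct (Nat.eqb_spec x z); congruence.
Qed.

Lemma uabs_unf {p} : uabs p -> is_value (unf p).
Proof.
  induction 1 as [v Hv | x p v Hg Hv | x p t _ IH]; rewrite ?unf_app_es.
  - exact Hv.
  - rewrite (gvar_unf Hg). simpl. rewrite Nat.eqb_refl. exact Hv.
  - apply value_subst, IH.
Qed.

Lemma uinert_unf {p} : uinert p -> ninert (unf p).
Proof.
  induction 1 as [i Hi | x p i Hg Hi | x p i _ IH _ Hi | x p v _ IH _ Hx Hv
                 | x p t _ IH Hx]; rewrite ?unf_app_es.
  - exact Hi.
  - rewrite (gvar_unf Hg). simpl. rewrite Nat.eqb_refl. exact Hi.
  - apply ninert_subst_inert; assumption.
  - unfold an in Hx. rewrite anE_unfE in Hx. apply ninert_subst_value; assumption.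
  - unfold nv in Hx. rewrite nvE_unfE in Hx. apply ninert_subst_unneeded; assumption.
Qed.

Theorem mainTheorem7 (p : prog) (Hwf : wf p) :
  (~ ((exists x, gvar x p) /\ uabs p) /\
   ~ ((exists x, gvar x p) /\ uinert p) /\
   ~ (uabs p /\ uinert p)) /\
  (forall x, gvar x p -> unf p = Fvar x) /\
  (uabs p -> is_value (unf p)) /\
  (uinert p -> ninert (unf p)).
Proof.
  split; [repeat split | split; [|split]].
  - intros [[x Hg] Ha]. destruct (uabs_unf Ha) as [b Hb].
    rewrite (gvar_unf Hg) in Hb. discriminate.
  - intros [[x Hg] Hi]. apply uinert_unf in Hi. rewrite (gvar_unf Hg) in Hi.
    inversion Hi.
  - intros [Ha Hi]. apply uinert_unf in Hi. destruct (uabs_unf Ha) as [b Hb].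
    rewrite Hb in Hi. inversion Hi.
  - intros x. apply gvar_unf.
  - apply uabs_unf.
  - apply uinert_unf.
Qed.
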